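(* Let $c\in[0,1)$ and $b=\tfrac12-c$. For any $\varepsilon>0$ and any $C>1$ there exist $0<\delta'<C\delta'<\delta<\tfrac12$ such that $\dim_H\mathcal B(\delta,\delta')<\varepsilon$.
   Context: $\mathbb T=\mathbb R/\mathbb Z$, $Tx=2x\bmod1$, $d$ the usual distance, $B(b,r)$ the open ball. Given $\tfrac12>\delta>\delta'>0$, a positive integer $n$ is a $(\delta,\delta')$-good time of $x\in\mathbb T$ if $d(T^nx,b)<\delta'$ and $b\notin T^j(J)$ for each $0\le j<n$, where $J$ is the connected component of $T^{-n}(B(b,\delta))$ containing $x$. $\mathcal B(\delta,\delta')=\{x\in\mathbb T: b\in\omega(x)$ but $x$ has no $(\delta,\delta')$-good time$\}$, where $\omega(x)$ is the $\omega$-limit set of $x$ under $T$. *)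

From HB Require Import structures.
From mathcomp Require Import all_boot all_order all_algebra.
From mathcomp Require Import all_classical all_reals all_analysis.
Set Implicit Arguments. Unset Strict Implicit. Unset Printing Implicit Defensive.
Import Order.TTheory GRing.Theory Num.Theory.
Import numFieldNormedType.Exports.
Local Open Scope classical_set_scope.
Local Open Scope ring_scope.

Section Defs.
Variable R : realType.

(* Points of T = R/Z are represented by reals (lifts); T x := 2x mod 1. *)
Definition fracR (x : R) : R := x - (Num.floor x)%:~R.

Definition dT (x y : R) : R := Num.min (fracR (x - y)) (1 - fracR (x - y)).

Definition Tn (n : nat) (x : R) : R := fracR (2 ^+ n * x).

Definition preball (n : nat) (b delta : R) : set R :=
  [set y | dT (Tn n y) b < delta].

(* J: connected component of T^{-n}(B(b,delta)) containing x (computed on the lift) *)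
Definition compJ (n : nat) (b delta x : R) : set R :=
  connected_component (preball n b delta) x.

Definition good_time (b delta delta' x : R) (n : nat) : Prop :=
  (0 < n)%N /\ dT (Tn n x) b < delta' /\
  forall j : nat, (j < n)%N ->
    ~ (exists y, compJ n b delta x y /\ dT (Tn j y) b = 0).

Definition in_omega (b x : R) : Prop :=
  forall e : R, 0 < e -> forall N : nat, exists n : nat, (N <= n)%N /\ dT (Tn n x) b < e.

(* the set B(delta, delta') as a subset of the fundamental domain [0,1) *)
Definition badset (b delta delta' : R) : set R :=
  [set x | 0 <= x < 1 /\ in_omega b x /\ ~ (exists n, good_time b delta delta' x n)].

Definition diamR (A : set R) : R :=
  sup [set d | exists x y, A x /\ A y /\ d = `|x - y|].

Definition hterm (s : R) (U : set R) : \bar R :=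
  (if pselect (U = set0) then 0 else powR (diamR U) s)%:E.

Definition eta_cover (eta : R) (A : set R) (U : nat -> set R) : Prop :=
  A `<=` \bigcup_i U i /\ forall i x y, U i x -> U i y -> `|x - y| <= eta.

Definition hcontent (s eta : R) (A : set R) : \bar R :=
  ereal_inf [set (\sum_(0 <= i <oo) hterm s (U i))%E | U in eta_cover eta A].

Definition hmeasure (s : R) (A : set R) : \bar R :=
  ereal_sup [set hcontent s eta A | eta in [set eta : R | 0 < eta]].

Definition hdim (A : set R) : \bar R :=
  ereal_inf [set s%:E | s in [set s : R | 0 <= s /\ hmeasure s A = 0%E]].

End Defs.

From HB Require Import structures.
From mathcomp Require Import all_boot all_order all_algebra.
From mathcomp Require Import all_classical all_reals all_analysis.
From mathcomp Require Import lra ring zify.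
Set Implicit Arguments. Unset Strict Implicit. Unset Printing Implicit Defensive.
Import Order.TTheory GRing.Theory Num.Theory.
Import numFieldNormedType.Exports.
Local Open Scope classical_set_scope.
Local Open Scope ring_scope.

(* If n is a return time of x to the d'-ball around b which is not good, some
   T^j, j < n, maps the component J to b.  As J lifts into a single branch
   b + k + (-d, d) of y |-> 2^n y, the lift v = 2^n x - b - k is pulled back to
   2^j x - b - i = (v + e) / 2^(n-j), where the return error e is the lift of
   b - 2^(n-j) b of modulus < d.  Iterating, x lies within d'/2^n of b + i + y
   for an endpoint y of such a chain started at 0.  For d small, either every
   return error vanishes (b periodic under doubling) or every return time is at
   least M; either way there are at most lam^n endpoints with lam < 2^s.  So
   B(delta, delta') is covered, for arbitrarily large n, by about lam^n intervals
   of length 2 d'/2^n, and its s-dimensional Hausdorff measure is 0. *)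

Section Circle.
Variable R : realType.
Implicit Types t : R.

Definition distZ t : R := Num.min (fracR t) (1 - fracR t).

Lemma dT_Tn n y b : dT (Tn n y) b = distZ (2 ^+ n * y - b).
Proof.
rewrite /dT /Tn /distZ /fracR; set f := Num.floor (2 ^+ n * y).
have -> : 2 ^+ n * y - f%:~R - b = (2 ^+ n * y - b) + (- f)%:~R by rewrite intrN; ring.
by rewrite floorDrz ?intr_int // intrD intrKfloor; congr (Num.min _ _); ring.
Qed.

Lemma distZ_le t (k : int) : distZ t <= `|t - k%:~R|.
Proof.
rewrite /distZ /fracR ge_min; have [u0|u0] := leP 0 (t - k%:~R).
- have : (k <= Num.floor t)%R by rewrite floor_ge_int; lra.
  by rewrite -(ler_int R) ger0_norm // => ?; apply/orP; left; lra.
- have : (Num.floor t < k)%R by rewrite floor_lt_int; lra.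
  rewrite -lezD1 -(ler_int R) intrD ltr0_norm // => ?; apply/orP; right; lra.
Qed.

Lemma distZ_attained t : exists k : int, `|t - k%:~R| = distZ t.
Proof.
have := floor_le t; have := floorD1_gt t; rewrite /distZ /fracR minEle intrD.
case: ifP => _ ? ?; first by exists (Num.floor t); rewrite ger0_norm //; lra.
by exists (Num.floor t + 1); rewrite intrD ler0_norm; lra.
Qed.

Lemma distZ_ge0 t : 0 <= distZ t.
Proof. by have [k <-] := distZ_attained t. Qed.

Lemma distZ_eq0 t : distZ t = 0 -> exists k : int, t = k%:~R.
Proof.
have [k <-] := distZ_attained t => /eqP; rewrite normr_eq0 subr_eq0 => /eqP ->.
by exists k.
Qed.

Lemma intr_norm_lt1 (z : int) : `|z%:~R : R| < 1 -> z = 0.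
Proof.
move=> h; apply/eqP; apply: contraLR h => hz; rewrite -leNgt.
by apply: norm_intr_ge1; rewrite ?intr_int ?intr_eq0.
Qed.

Lemma distZ_half (k : int) : 1 / 2 <= distZ (k%:~R + 1 / 2).
Proof.
have [j <-] := distZ_attained (k%:~R + 1 / 2).
have -> : k%:~R + 1 / 2 - j%:~R = (k - j)%:~R + 1 / 2 :> R by rewrite intrB; ring.
have [kj|kj] := leP 0 (k - j).
- by rewrite ger0_norm; have := ler0z R (k - j); rewrite kj; lra.
- have : (k - j)%:~R <= (-1)%:~R :> R by rewrite ler_int; lia.
  by rewrite rmorphN1 => ?; rewrite ler0_norm; lra.
Qed.

End Circle.

Section Component.
Variable R : realType.

Lemma compJ_norm_lt (n : nat) (b d x y : R) (k : int) :
  d < 1 / 2 -> `|2 ^+ n * x - b - k%:~R| < d -> compJ n b d x y ->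
  `|2 ^+ n * y - b - k%:~R| < d.
Proof.
move=> d12 hx Jy; set J := compJ n b d x.
have e2 : 0 < (2 : R) ^+ n by rewrite exprn_gt0.
have Jx : J x.
  apply: connected_component_refl; rewrite /preball /= dT_Tn.
  exact: le_lt_trans (distZ_le _ k) hx.
have Jint : is_interval J by apply/connected_intervalP; exact: component_connected.
have JP z : J z -> distZ (2 ^+ n * z - b) < d.
  by move=> /connected_component_sub; rewrite /preball /= dT_Tn; apply.
(* J cannot cross a point z with 2^n z - b a half-integer, since distZ = 1/2 > d there *)
have no_half u w (j : int) : J u -> J w ->
    2 ^+ n * u - b <= j%:~R + 1 / 2 <= 2 ^+ n * w - b -> False.
  move=> Ju Jw /andP[uj jw]; set z := (b + j%:~R + 1 / 2) / 2 ^+ n.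
  have z2 : 2 ^+ n * z = b + j%:~R + 1 / 2 by rewrite mulrC divfK ?gt_eqF.
  have Jz : J z.
    by apply: (Jint u w) => //; apply/andP; split; rewrite -(ler_pM2l e2) z2; lra.
  have := JP z Jz; have := @distZ_half R j; rewrite z2.
  have -> : b + j%:~R + 1 / 2 - b = j%:~R + 1 / 2 by ring.
  lra.
have [k' hk'] := distZ_attained (2 ^+ n * y - b); have := JP y Jy; rewrite -hk'.
have [->|kk] := eqVneq k' k; first by [].
move: hx; rewrite !ltr_norml => hx hy; exfalso.
have [lt|lt] := ltP k' k.
- have : (k' + 1)%:~R <= k%:~R :> R by rewrite ler_int; lia.
  by rewrite intrD => ?; apply: (no_half y x (k - 1)) => //; rewrite intrB; lra.
- have : (k + 1)%:~R <= k'%:~R :> R by rewrite ler_int; lia.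
  by rewrite intrD => ?; apply: (no_half x y k) => //; lra.
Qed.

End Component.

Section Chains.
Variable R : realType.
Implicit Types b d u v y e : R.

Definition return_err b d (m : nat) e :=
  `|e| < d /\ exists z : int, e = b - 2 ^+ m * b + z%:~R.

Inductive chain b d : nat -> R -> R -> Prop :=
| chain0 v : chain b d 0 v v
| chainS m n v y e : (0 < m)%N -> return_err b d m e ->
    chain b d n ((v + e) / 2 ^+ m) y -> chain b d (m + n) v y.

Definition step_contracts b d d' := forall m e v, (0 < m)%N ->
  return_err b d m e -> `|v| < d' -> `|(v + e) / 2 ^+ m| < d'.

Lemma return_err_uniq b d m e1 e2 : d <= 1 / 2 ->
  return_err b d m e1 -> return_err b d m e2 -> e1 = e2.
Proof.
move=> d12 [h1 [z1 he1]] [h2 [z2 he2]]; subst e1 e2.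
suff -> : z1 = z2 by [].
apply/eqP; rewrite -subr_eq0; apply/eqP/(@intr_norm_lt1 R); rewrite intrB.
have -> : z1%:~R - z2%:~R = (b - 2 ^+ m * b + z1%:~R) - (b - 2 ^+ m * b + z2%:~R) :> R.
  by ring.
by apply: le_lt_trans (ler_normB _ _) _; lra.
Qed.

Lemma return_of_not_good_time b d d' x n (k : int) :
  d' < d -> d < 1 / 2 -> (0 < n)%N -> `|2 ^+ n * x - b - k%:~R| < d' ->
  ~ good_time b d d' x n -> exists m j e (i : int), [/\ n = (m + j)%N, (0 < m)%N,
    return_err b d m e & (2 ^+ n * x - b - k%:~R + e) / 2 ^+ m = 2 ^+ j * x - b - i%:~R].
Proof.
move=> d'd d12 n0 hx; rewrite /good_time dT_Tn.
move=> /not_andP[//|/not_andP[|]]; first by have := distZ_le (2 ^+ n * x - b) k; lra.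
move/existsNP => [j /not_implyP [jn /contrapT [y [Jy]]]].
rewrite dT_Tn => /distZ_eq0 [i hi].
have hyk := compJ_norm_lt d12 (lt_trans hx d'd) Jy.
exists (n - j)%N, j, (b + k%:~R - 2 ^+ (n - j) * (b + i%:~R)), i.
have nmj : n = ((n - j) + j)%N by rewrite subnK // ltnW.
have e2 : (2 : R) ^+ (n - j) != 0 by rewrite expf_neq0.
have yn : 2 ^+ n * y = 2 ^+ (n - j) * (b + i%:~R).
  by rewrite {1}nmj exprD -mulrA; congr (_ * _); rewrite -hi; ring.
split=> //; first by rewrite subn_gt0.
- split; first by rewrite -normrN; move: hyk; rewrite yn; congr (`|_| < _); ring.
  by exists (k - i * 2 ^+ (n - j)); rewrite intrB intrM rmorphXn /=; ring.
- by rewrite {1}nmj exprD; field.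
Qed.

Lemma chain_of_no_good_time b d d' x : step_contracts b d d' -> d' < d -> d < 1 / 2 ->
  ~ (exists n, good_time b d d' x n) -> forall n (k : int),
  `|2 ^+ n * x - b - k%:~R| < d' ->
  exists i : int, chain b d n (2 ^+ n * x - b - k%:~R) (x - b - i%:~R).
Proof.
move=> step d'd d12 ng n; elim/ltn_ind: n => n IH k hx.
have [->|n0] := posnP n; first by exists k; rewrite expr0 mul1r; exact: chain0.
have [m [j [e [i [nmj m0 he hv]]]]] :=
  return_of_not_good_time d'd d12 n0 hx (fun g => ng (ex_intro _ n g)).
have hj : `|2 ^+ j * x - b - i%:~R| < d' by rewrite -hv; exact: step.
have [|i' hc] := IH j _ i hj; first by rewrite nmj -{1}[j]add0n ltn_add2r.
by exists i'; have := chainS m0 he (_ : chain b d j _ _); rewrite -nmj; apply; rewrite hv.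
Qed.

Lemma chain_inv b d n v y : chain b d n v y -> (n = 0%N /\ y = v) \/
  exists m n' e, [/\ n = (m + n')%N, (0 < m)%N, return_err b d m e &
    chain b d n' ((v + e) / 2 ^+ m) y].
Proof. by case=> [|m n' {}v {}y e]; [left | right; exists m, n', e]. Qed.

Lemma chain_norm_lt b d d' n v y :
  step_contracts b d d' -> chain b d n v y -> `|v| < d' -> `|y| < d'.
Proof. by move=> step; elim=> // m {}n {}v {}y e m0 he _ IH hv; apply/IH/step. Qed.

Lemma chain_shift b d n v y u : chain b d n v y -> chain b d n (v + u) (y + u / 2 ^+ n).
Proof.
move=> c; elim: c u => [{}v u|m {}n {}v {}y e m0 he _ IH u].
  by rewrite expr0 divr1; exact: chain0.
apply: chainS m0 he _; rewrite addrAC mulrDl exprD invfM mulrA; exact: IH.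
Qed.

Lemma chain_err0 b d n v y : (forall m e, return_err b d m e -> e = 0) ->
  chain b d n v y -> y = v / 2 ^+ n.
Proof.
move=> err0; elim=> [{}v|m {}n {}v {}y e m0 he _ ->]; first by rewrite expr0 divr1.
by rewrite (err0 _ _ he) addr0 exprD -mulrA -invfM.
Qed.

End Chains.

Section Endpoints.
Variable R : realType.
Implicit Types b d lam : R.

Definition few_endpoints b d n (L : R) := exists cs : seq R,
  (size cs)%:R <= L /\ forall y, chain b d n 0 y -> y \in cs.

Lemma few_endpoints_err0 b d n : (forall m e, return_err b d m e -> e = 0) ->
  few_endpoints b d n 1.
Proof.
move=> err0; exists [:: 0]; split=> // y /(chain_err0 err0) ->.
by rewrite mul0r inE.
Qed.

Lemma seq_cover_big (I : eqType) (r : seq I) (P : I -> R -> Prop) (B : I -> R) :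
  (forall i, i \in r -> exists cs : seq R, (size cs)%:R <= B i /\ forall y, P i y -> y \in cs) ->
  exists cs : seq R, (size cs)%:R <= \sum_(i <- r) B i /\
    forall i y, i \in r -> P i y -> y \in cs.
Proof.
elim: r => [|i r IH] hr; first by exists [::]; rewrite big_nil.
have [cs1 [s1 c1]] := hr i (mem_head _ _).
have [|cs2 [s2 c2]] := IH; first by move=> j jr; apply: hr; rewrite inE jr orbT.
exists (cs1 ++ cs2); split; first by rewrite size_cat natrD big_cons lerD.
move=> j y; rewrite inE mem_cat => /orP[/eqP -> /c1 -> //|jr /(c2 _ _ jr) ->].
by rewrite orbT.
Qed.

Lemma sum_expr_rev_le lam M n : 1 < lam -> (0 < M)%N -> 1 <= lam ^+ M.-1 * (lam - 1) ->
  \sum_(M <= m < n.+1) lam ^+ (n - m) <= lam ^+ n.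
Proof.
move=> l1 M0 hM; have l0 : 0 < lam - 1 by lra.
have [nM|Mn] := ltnP n M; first by rewrite big_geq // exprn_ge0 //; lra.
rewrite big_nat_rev /= (big_addn 0 _ M) /=.
rewrite (@eq_big_nat _ _ _ 0 _ _ (fun i => lam ^+ i)); last first.
  by move=> i /andP[_ hi]; congr (_ ^+ _); lia.
rewrite -(ler_pM2r l0) big_mkord mulrC -subrX1.
set k := (n.+1 - M)%N; have -> : n = (k + M.-1)%N by rewrite /k; lia.
have k0 : 0 <= lam ^+ k by rewrite exprn_ge0 //; lra.
by rewrite exprD -mulrA; have := ler_wpM2l k0 hM; lra.
Qed.

Lemma few_endpoints_long b d lam M : d <= 1 / 2 -> 1 < lam -> (0 < M)%N ->
  1 <= lam ^+ M.-1 * (lam - 1) ->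
  (forall m e, (0 < m)%N -> return_err b d m e -> (M <= m)%N) ->
  forall n, few_endpoints b d n (lam ^+ n).
Proof.
move=> d12 l1 M0 hM long n; elim/ltn_ind: n => n IH.
have [->|n0] := posnP n.
  exists [:: 0]; split; first by rewrite expr0.
  move=> y /chain_inv[[_ ->]|[m [n' [e [mn m0 _ _]]]]]; first by rewrite inE.
  by exfalso; lia.
(* a chain from 0 starts with a step of length m in [M, n], whose error is unique *)
pose P m y := exists e, return_err b d m e /\ chain b d (n - m) (e / 2 ^+ m) y.
have [|cs [hs hc]] := @seq_cover_big _ (index_iota M n.+1) P (fun m => lam ^+ (n - m)).
  move=> m; rewrite mem_index_iota => /andP[Mm mn].
  have [[e he]|none] := pselect (exists e, return_err b d m e); last first.
    exists [::]; split; first by rewrite exprn_ge0 //; lra.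
    by move=> y [e [he _]]; case: none; exists e.
  have [|cs [hs hc]] := IH (n - m)%N; first by lia.
  exists [seq c + e / 2 ^+ n | c <- cs]; split; first by rewrite size_map.
  move=> y [e' [/(return_err_uniq d12 he) <- /(chain_shift (- (e / 2 ^+ m)))]].
  rewrite subrr => /hc yc; apply/mapP; exists (y + - (e / 2 ^+ m) / 2 ^+ (n - m)) => //.
  have mn' : (m <= n)%N by [].
  by rewrite -{2}(subnKC mn') exprD invfM mulNr mulrA addrNK.
exists cs; split; first exact: le_trans hs (sum_expr_rev_le _ l1 M0 hM).
move=> y /chain_inv[[n00 _]|[m [n' [e [nmn m0 he c]]]]]; first by exfalso; lia.
apply: (hc m); first by rewrite mem_index_iota (long _ _ m0 he); lia.
rewrite add0r in c; exists e; split=> //.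
by rewrite (_ : (n - m)%N = n') //; lia.
Qed.

End Endpoints.

Section SmallScales.
Variable R : realType.
Implicit Types b d lam : R.

Lemma expr_eventually_le (q t : R) : `|q| < 1 -> 0 < t -> \forall n \near \oo, q ^+ n <= t.
Proof.
move=> q1 t0; have /cvgr0_norm_le/(_ _ t0) : (fun n => q ^+ n) @ \oo --> (0 : R).
  exact: cvg_expr.
apply: filterS => n h; have {h} : `|q ^+ n| <= t := h.
exact: le_trans (ler_norm _).
Qed.

Lemma exists_pos_lbound (h : nat -> R) K : (forall i, (i < K)%N -> 0 < h i) ->
  exists d, 0 < d /\ forall i, (i < K)%N -> d <= h i.
Proof.
elim: K => [|K IH] hpos; first by exists 1.
have [|d [d0 hd]] := IH; first by move=> i iK; apply/hpos/ltnW.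
exists (Num.min d (h K)); split; first by rewrite lt_min d0 hpos.
move=> i; rewrite ltnS leq_eqVlt => /orP[/eqP ->|iK]; first by rewrite ge_min lexx orbT.
by rewrite ge_min hd.
Qed.

Lemma exists_return_err_eq0 b K : exists d, [/\ 0 < d, d < 1 / 2 &
  forall m e, (m < K)%N -> return_err b d m e -> e = 0].
Proof.
(* d stays below every nonzero distZ (2^i b - b), i < K *)
pose h i := if distZ (2 ^+ i * b - b) == 0 then 1 else distZ (2 ^+ i * b - b).
have [|d1 [d10 hd1]] := @exists_pos_lbound h K.
  move=> i _; rewrite /h; case: eqP => // /eqP hne.
  by rewrite lt_def hne distZ_ge0.
set d := Num.min d1 (1 / 4).
have dd1 : d <= d1 by rewrite ge_min lexx.
have d4 : d <= 1 / 4 by rewrite ge_min lexx orbT.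
exists d; split; [by rewrite lt_min d10; lra | lra |].
move=> m e mK [he [z ez]].
have hm : distZ (2 ^+ m * b - b) < d.
  have -> : 2 ^+ m * b - b = - e + z%:~R by rewrite ez; ring.
  by have := distZ_le (- e + z%:~R) z; rewrite addrK normrN; lra.
have [u hu] : exists u : int, 2 ^+ m * b - b = u%:~R.
  apply: distZ_eq0; apply: contraTeq hm => /negPf hne; rewrite -leNgt.
  by have := hd1 m mK; rewrite /h hne; lra.
have eu : e = (z - u)%:~R by rewrite intrB -hu ez; ring.
by rewrite eu (@intr_norm_lt1 R (z - u)) // -eu; lra.
Qed.

Lemma return_err_periodic b d p (z0 : int) : (0 < p)%N -> 2 ^+ p * b - b = z0%:~R ->
  forall m e, return_err b d m e -> exists2 i, (i < p)%N & return_err b d i e.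
Proof.
move=> p0 hp m e [he [z ez]].
suff [i ip [w hw]] : exists2 i, (i < p)%N & exists w : int, 2 ^+ m * b = 2 ^+ i * b + w%:~R.
  by exists i => //; split=> //; exists (z - w); rewrite ez hw intrB; ring.
elim/ltn_ind: m {he ez} => m IH; have [mp|pm] := ltnP m p.
  by exists m => //; exists 0; rewrite addr0.
have [|i ip [w hw]] := IH (m - p)%N; first by lia.
exists i => //; exists (w + z0 * 2 ^+ (m - p)).
have -> : (2 : R) ^+ m = 2 ^+ (m - p) * 2 ^+ p by rewrite -exprD subnK.
rewrite -mulrA -[2 ^+ p * b](subrK b) hp mulrDr hw.
by rewrite intrD intrM rmorphXn /=; ring.
Qed.

Lemma step_contracts_err0 b d d' : (forall m e, return_err b d m e -> e = 0) ->
  step_contracts b d d'.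
Proof.
move=> err0 m e v m0 /err0 -> hv; rewrite addr0 normrM normfV.
have e1 : 1 <= `|(2 : R) ^+ m| by rewrite normrX ger0_norm // exprn_ege1 // ler1n.
apply: le_lt_trans hv; rewrite ler_pdivrMr ?(lt_le_trans ltr01 e1) //.
by rewrite ler_peMr.
Qed.

Lemma step_contracts_long b d d' M :
  (forall m e, (0 < m)%N -> return_err b d m e -> (M <= m)%N) -> d' + d <= 2 ^+ M * d' ->
  step_contracts b d d'.
Proof.
move=> long hM m e v m0 he hv; have [hed _] := he.
have e2 : 0 < (2 : R) ^+ m by rewrite exprn_gt0.
rewrite normrM normfV (ger0_norm (ltW e2)) ltr_pdivrMr //.
have hve : `|v| + `|e| < d' + d by lra.
apply: le_lt_trans (ler_normD _ _) (lt_le_trans hve (le_trans hM _)).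
rewrite mulrC; apply: ler_wpM2l; first exact: le_trans (normr_ge0 v) (ltW hv).
by rewrite ler_eXn2l ?ltr1n // (long _ _ m0 he).
Qed.

Lemma exists_long_return_bound lam (Y : R) : 1 < lam -> 0 < Y -> exists M, [/\ (0 < M)%N,
  1 <= lam ^+ M.-1 * (lam - 1) & Y <= 2 ^+ M].
Proof.
move=> l1 Y0; have l0 : 0 < lam - 1 by lra.
have lV : `|lam^-1| < 1 by rewrite ger0_norm ?invr_ge0 ?invf_lt1 //; lra.
have hV : `|2^-1 : R| < 1 by rewrite ger0_norm ?invr_ge0 ?invf_lt1 ?ltr1n.
have YV : 0 < Y^-1 by rewrite invr_gt0.
have [N _ hN] := filterI (expr_eventually_le lV l0) (expr_eventually_le hV YV).
have [hl h2] := hN N (leqnn N); exists N.+1; split=> //=.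
  have lam0 : 0 < lam ^+ N by rewrite exprn_gt0 //; lra.
  by move: hl; rewrite exprVn -div1r ler_pdivrMr // mulrC.
move: h2; rewrite exprVn lef_pV2 ?posrE ?exprn_gt0 // => h2.
by apply: le_trans h2 _; rewrite ler_eXn2l ?ltr1n.
Qed.

Lemma exists_contracting_scale b C lam : 1 < C -> 1 < lam -> exists d, [/\ 0 < d, d < 1 / 2,
  step_contracts b d (d / (2 * C)) & forall n, few_endpoints b d n (lam ^+ n)].
Proof.
move=> C1 l1; have [|M [M0 hM h2M]] := @exists_long_return_bound lam (2 * C + 1) l1; first lra.
have [[p [p0 [z0 hp]]]|aper] :=
  pselect (exists p, (0 < p)%N /\ exists z0 : int, 2 ^+ p * b - b = z0%:~R).
  have [d [d0 d12 err0]] := exists_return_err_eq0 b p.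
  have {}err0 m e : return_err b d m e -> e = 0.
    by move=> /(return_err_periodic p0 hp) [i ip]; apply: err0.
  exists d; split=> //; first exact: step_contracts_err0.
  move=> n; have [cs [hs hc]] := few_endpoints_err0 n err0.
  by exists cs; split=> //; apply: le_trans hs (exprn_ege1 _ (ltW l1)).
have [d [d0 d12 err0]] := exists_return_err_eq0 b M.
have long m e : (0 < m)%N -> return_err b d m e -> (M <= m)%N.
  move=> m0 he; rewrite leqNgt; apply/negP => mM; apply: aper; exists m; split=> //.
  have [_ [z ez]] := he; exists z.
  by move: ez; rewrite (err0 _ _ mM he) => ?; lra.
exists d; split=> //; last exact: few_endpoints_long (ltW d12) l1 M0 hM long.
apply: step_contracts_long long _.
have C0 : 0 < 2 * C by lra.
have -> : d / (2 * C) + d = d / (2 * C) * (2 * C + 1) by field; lra.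
rewrite mulrC; apply: ler_wpM2r h2M; rewrite divr_ge0 //; lra.
Qed.

End SmallScales.

Section Hausdorff.
Variable R : realType.
Implicit Types (s : R) (U A : set R).

Definition hval s U : R := if pselect (U = set0) then 0 else powR (diamR U) s.

Lemma htermE s U : hterm s U = (hval s U)%:E.
Proof. by []. Qed.

Lemma hval_ge0 s U : 0 <= hval s U.
Proof. by rewrite /hval; case: (pselect (U = set0)) => U0 //; exact: powR_ge0. Qed.

Lemma hval_set0 s : hval s set0 = 0.
Proof. by rewrite /hval; case: (pselect (set0 = set0)). Qed.

Lemma hval_le s (D : R) U : 0 <= s ->
  (forall x y, U x -> U y -> `|x - y| <= D) -> hval s U <= powR D s.
Proof.
move=> s0 hU; rewrite /hval; case: (pselect (U = set0)) => U0; first exact: powR_ge0.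
have /set0P [x0 Ux0] : U != set0 by apply/eqP.
set E := [set d | exists x y, U x /\ U y /\ d = `|x - y|].
have E0 : E 0 by exists x0, x0; rewrite subrr normr0.
have Eub : ubound E D by move=> _ [x [y [Ux [Uy ->]]]]; exact: hU.
have diam0 : 0 <= diamR U by apply: ub_le_sup E0; exists D.
have diamD : diamR U <= D by apply: ge_sup => //; exists 0.
by apply: ge0_ler_powR => //; rewrite nnegrE (le_trans diam0).
Qed.

Lemma hval_ball_le s (c rr : R) : 0 <= s ->
  hval s [set x | `|x - c| < rr] <= powR (2 * rr) s.
Proof.
move=> s0; apply: hval_le => // x y /= hx hy.
have -> : x - y = (x - c) - (y - c) by ring.
by apply: le_trans (ler_normB _ _) _; lra.
Qed.

Lemma nneseries_le_sums (g : nat -> R) (B : R) : (forall i, 0 <= g i) ->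
  (forall K, \sum_(0 <= i < K) g i <= B) -> (\sum_(0 <= i <oo) (g i)%:E <= B%:E)%E.
Proof.
move=> g0 hB.
have h0 n : (0 <= n)%N -> xpredT n -> (0 <= (g n)%:E)%E by rewrite lee_fin.
move: (ereal_nondecreasing_series h0) => /ereal_nondecreasing_cvgn/cvg_lim -> //.
by apply: ge_ereal_sup => _ [K _ <-] /=; rewrite sumEFin lee_fin.
Qed.

Lemma hmeasure_eq0 s A : 0 <= s ->
  (forall eta tau : R, 0 < eta -> 0 < tau -> exists U : nat -> set R,
     eta_cover eta A U /\ forall K, \sum_(0 <= i < K) hval s (U i) <= tau) ->
  hmeasure s A = 0%E.
Proof.
move=> s0 H.
have hc eta : 0 < eta -> hcontent s eta A = 0%E.
  move=> eta0; apply/eqP; rewrite eq_le; apply/andP; split.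
    apply/lee_addgt0Pr => tau tau0; rewrite add0e.
    have [U [hU hK]] := H eta tau eta0 tau0.
    apply: ge_ereal_inf; exists (\sum_(0 <= i <oo) hterm s (U i))%E; first by exists U.
    exact: nneseries_le_sums (fun i => hval_ge0 s (U i)) hK.
  apply: le_ereal_inf_tmp => _ [U hU <-].
  by apply: nneseries_ge0 => n _ _; rewrite htermE lee_fin hval_ge0.
apply/eqP; rewrite eq_le; apply/andP; split.
  by apply: ge_ereal_sup => _ [eta /= eta0 <-]; rewrite hc.
apply: le_ereal_sup_tmp; exists (hcontent s 1 A); last by rewrite hc.
by exists 1; rewrite /= ?ltr01.
Qed.

Lemma hdim_lt (A : set R) (eps s : R) : 0 <= s -> s < eps ->
  hmeasure s A = 0%E -> (hdim A < eps%:E)%E.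
Proof.
move=> s0 seps h; apply: (le_lt_trans (y := s%:E)); last by rewrite lte_fin.
by apply: ereal_inf_lbound; exists s.
Qed.

End Hausdorff.

Section DyadicBalls.
Variable R : realType.
Variables (cs : nat -> seq R) (r : nat -> R).
Hypothesis size_cs : forall n, (size (cs n) <= 2 ^ n.+1)%N.

(* The balls of level n sit at the indices 2^(n+1) + t, t < size (cs n). *)
Definition dyadic_ball (i : nat) : set R :=
  if trunc_log 2 i is n.+1 then
    if (i - 2 ^ n.+1 < size (cs n))%N then [set x | `|x - nth 0 (cs n) (i - 2 ^ n.+1)| < r n]
    else set0
  else set0.

Lemma dyadic_ballE n t : (t < 2 ^ n.+1)%N -> dyadic_ball (2 ^ n.+1 + t) =
  if (t < size (cs n))%N then [set x | `|x - nth 0 (cs n) t| < r n] else set0.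
Proof.
move=> tn; rewrite /dyadic_ball (@trunc_log_eq _ n.+1) ?addKn //.
by rewrite leq_addr (expnS 2 n.+1) mul2n -addnn ltn_add2l.
Qed.

Lemma dyadic_ball_cover n c x : c \in cs n -> `|x - c| < r n ->
  exists i, dyadic_ball i x.
Proof.
move=> cn hx; have tn : (index c (cs n) < size (cs n))%N by rewrite index_mem.
exists (2 ^ n.+1 + index c (cs n))%N; rewrite dyadic_ballE ?tn ?nth_index //.
exact: leq_trans tn (size_cs n).
Qed.

Lemma dyadic_ball_center i x : dyadic_ball i x ->
  exists n, exists2 c, c \in cs n & dyadic_ball i = [set y | `|y - c| < r n].
Proof.
rewrite /dyadic_ball; case: (trunc_log 2 i) => [|n] //.
by case: ifP => // tn _; exists n, (nth 0 (cs n) (i - 2 ^ n.+1)); rewrite ?mem_nth.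
Qed.

Lemma sum_dyadic_ball s K : 0 <= s -> \sum_(0 <= i < 2 ^ K.+1) hval s (dyadic_ball i) <=
  \sum_(n < K) (size (cs n))%:R * powR (2 * r n) s.
Proof.
move=> s0; elim: K => [|K IH].
  by rewrite big_ord0 expn1 !big_nat_recl // big_geq //= /dyadic_ball /= !hval_set0 !addr0.
rewrite big_ord_recr (big_cat_nat (n := 2 ^ K.+1)) ?leq_pexp2l //= lerD //.
rewrite -{1}[(2 ^ K.+1)%N]add0n big_addn (expnS 2 K.+1) mul2n -addnn addnK.
apply: le_trans (ler_sum_nat (G := fun t => if (t < size (cs K))%N then powR (2 * r K) s else 0) _) _.
  move=> t /= tK; rewrite addnC dyadic_ballE //; case: ifP => _; last by rewrite hval_set0.
  exact: hval_ball_le.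
rewrite -big_mkcond /= big_mkord -(big_ord_widen _ (fun _ => powR (2 * r K) s) (size_cs K)).
by rewrite sumr_const card_ord -(mulr_natl (powR (2 * r K) s)).
Qed.

End DyadicBalls.

Lemma hmeasure_eq0_balls (R : realType) (s : R) (A : set R) : 0 <= s ->
  (forall eta tau : R, 0 < eta -> 0 < tau -> exists (cs : nat -> seq R) (r : nat -> R), [/\
     forall n, (size (cs n) <= 2 ^ n.+1)%N,
     A `<=` [set x | exists n, exists2 c, c \in cs n & `|x - c| < r n],
     forall n c, c \in cs n -> 2 * r n <= eta &
     forall K, \sum_(n < K) (size (cs n))%:R * powR (2 * r n) s <= tau]) ->
  hmeasure s A = 0%E.
Proof.
move=> s0 H; apply: hmeasure_eq0 => // eta tau eta0 tau0.
have [cs [r [hsz hA hdiam hsum]]] := H eta tau eta0 tau0.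
exists (dyadic_ball cs r); split; first split.
- by move=> x /hA [n [c cn hx]]; have [i hi] := dyadic_ball_cover hsz cn hx; exists i.
- move=> i x y hx; have [n [c cn bi]] := dyadic_ball_center hx.
  rewrite bi /= in hx * => hy; apply: le_trans (hdiam n c cn).
  have -> : x - y = (x - c) - (y - c) by ring.
  by apply: le_trans (ler_normB _ _) _; lra.
- move=> K; apply: le_trans _ (hsum K); apply: le_trans _ (@sum_dyadic_ball _ cs r hsz s K s0).
  have KK : (K <= 2 ^ K.+1)%N by apply/ltnW/(leq_trans (ltn_expl K (ltnSn 1))); rewrite leq_pexp2l.
  rewrite (big_cat_nat (leq0n K) KK) /= lerDl.
  by apply: sumr_ge0 => i _; exact: hval_ge0.
Qed.

Lemma sum_expr_tail_le (R : realType) (q : R) N K : 0 <= q < 1 ->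
  \sum_(n < K) (if (N <= n)%N then q ^+ n else 0) <= q ^+ N / (1 - q).
Proof.
move=> /andP[q0 q1]; have q1' : 0 < 1 - q by lra.
pose F n := if (N <= n)%N then q ^+ n else 0.
have F0 n : 0 <= F n by rewrite /F; case: ifP; rewrite ?exprn_ge0.
rewrite -(big_mkord xpredT F); apply: le_trans (_ : \sum_(0 <= n < N + K) F n <= _).
  by rewrite (big_cat_nat (n := K) (leq0n K) (leq_addl N K)) /= lerDl sumr_ge0.
rewrite (big_cat_nat (n := N) (leq0n N) (leq_addr K N)) /= big1_seq => [|n]; last first.
  by rewrite mem_index_iota /F => /andP[_ /andP[_]]; rewrite ltnNge => /negPf ->.
rewrite add0r (@eq_big_nat _ _ _ N _ _ (fun n => q ^+ n)) => [|n /andP[Nn _]]; last first.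
  by rewrite /F Nn.
rewrite geometric_partial_tail geometric_seriesE ?lt_eqF //= ler_pM2r ?invr_gt0 //.
by apply: ler_piMr; rewrite ?exprn_ge0 // lerBlDr lerDl exprn_ge0.
Qed.

Lemma powR_divX (R : realType) (a x s : R) n : 0 <= a -> 0 < x ->
  powR (a / x ^+ n) s = powR a s / powR x s ^+ n.
Proof.
move=> a0 x0; have xn : 0 < x ^+ n by rewrite exprn_gt0.
rewrite powRM ?invr_ge0 ?(ltW xn) //; congr (_ * _).
have -> : powR ((x ^+ n)^-1) s = (powR (x ^+ n) s)^-1.
  rewrite /powR ifF; last by apply/negbTE; rewrite invr_eq0 gt_eqF.
  by rewrite ifF ?gt_eqF // lnV ?posrE // mulrN expRN.
by rewrite -powR_mulrn ?ltW // -powRrM mulrC powRrM powR_mulrn ?powR_ge0.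
Qed.

Section BadSet.
Variable R : realType.
Implicit Types b d x lam s : R.

Definition lift_centers b (cs : seq R) := [seq b + y | y <- cs] ++ [seq b + 1 + y | y <- cs].

Lemma int_offset_01 x b d' (i : int) : 0 <= x < 1 -> - (1 / 2) < b <= 1 / 2 -> d' <= 1 / 2 ->
  `|x - b - i%:~R| < d' -> i = 0 \/ i = 1.
Proof.
move=> /andP[x0 x1] /andP[bl bu] d'2; rewrite ltr_norml => /andP[hl hr].
have : (-1)%:~R < i%:~R :> R by rewrite rmorphN1; lra.
have : i%:~R < 2%:~R :> R by lra.
by rewrite !ltr_int; lia.
Qed.

Lemma badset_near_centers b d d' (cs : nat -> seq R) :
  - (1 / 2) < b <= 1 / 2 -> 0 < d' -> d' < d -> d < 1 / 2 -> step_contracts b d d' ->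
  (forall n y, chain b d n 0 y -> y \in cs n) -> forall x, badset b d d' x ->
  forall N, exists2 n, (N <= n)%N & exists2 c, c \in lift_centers b (cs n) & `|x - c| < d' / 2 ^+ n.
Proof.
move=> hb d'0 d'd d12 step hcs x [x01 [om ng]] N.
have [n [Nn]] := om d' d'0 N; rewrite dT_Tn.
have [k <-] := distZ_attained (2 ^+ n * x - b); set v := _ - k%:~R => hv.
have [i c] := chain_of_no_good_time step d'd d12 ng hv.
have := chain_shift (- v) c; rewrite subrr => /hcs yc.
set y := x - b - i%:~R + - v / 2 ^+ n in yc; exists n => //; exists (b + i%:~R + y).
  rewrite mem_cat; have [->|->] := int_offset_01 x01 hb (ltW (lt_trans d'd d12)) (chain_norm_lt step c hv).
    by rewrite mulr0z addr0 map_f.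
  by rewrite mulr1z map_f ?orbT.
rewrite (_ : x - _ = v / 2 ^+ n); last by rewrite /y; ring.
have e2 : 0 < (2 : R) ^+ n by rewrite exprn_gt0.
by rewrite normrM normfV (ger0_norm (ltW e2)) ltr_pM2r // invr_gt0.
Qed.

Lemma powR_level_le (L lam d' s : R) n : 0 <= d' -> L <= lam ^+ n ->
  L * powR (2 * (d' / 2 ^+ n)) s <= powR (2 * d') s * (lam / powR 2 s) ^+ n.
Proof.
move=> d'0 hL; rewrite mulrA powR_divX ?ltr0n // ?mulr_ge0 //.
rewrite expr_div_n mulrCA; apply: ler_wpM2l; first exact: powR_ge0.
by apply: ler_wpM2r; rewrite // invr_ge0 exprn_ge0 ?powR_ge0.
Qed.

Lemma hmeasure_badset_eq0 b d d' lam s :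
  - (1 / 2) < b <= 1 / 2 -> 0 < d' -> d' < d -> d < 1 / 2 -> 0 < s ->
  1 <= lam <= 2 -> lam < powR 2 s -> step_contracts b d d' ->
  (forall n, few_endpoints b d n (lam ^+ n)) -> hmeasure s (badset b d d') = 0%E.
Proof.
move=> hb d'0 d'd d12 s0 /andP[l1 l2] lA step /choice [cs hcs].
set q := lam / powR 2 s; set P := powR (2 * d') s.
have A0 : 0 < powR 2 s by rewrite powR_gt0.
have q01 : 0 <= q < 1 by rewrite divr_ge0 ?ltr_pdivrMr ?mul1r ?(ltW A0) //=; lra.
have q1 : `|q| < 1 by rewrite ger0_norm; case/andP: q01.
have P0 : 0 < P by rewrite powR_gt0 //; lra.
have h1 : `|2^-1 : R| < 1 by rewrite ger0_norm ?invr_ge0 ?invf_lt1 ?ltr1n.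
apply: hmeasure_eq0_balls (ltW s0) _ => eta tau eta0 tau0.
have tau' : 0 < tau * (1 - q) / (2 * P).
  by rewrite !mulr_gt0 ?invr_gt0 ?mulr_gt0 //; case/andP: q01; lra.
have eta' : 0 < eta / (2 * d') by rewrite divr_gt0 //; lra.
have [N _ hN] := filterI (expr_eventually_le q1 tau') (expr_eventually_le h1 eta').
exists (fun n => if (N <= n)%N then lift_centers b (cs n) else [::]), (fun n => d' / 2 ^+ n).
split.
- move=> n; case: ifP => // _; rewrite size_cat !size_map addnn -mul2n expnS leq_mul2l /=.
  rewrite -(ler_nat R) natrX; apply: le_trans (proj1 (hcs n)) _.
  by rewrite lerXn2r ?nnegrE //; lra.
- move=> x /(badset_near_centers hb d'0 d'd d12 step (fun n => proj2 (hcs n))) /(_ N).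
  by move=> [n Nn [c cn hc]]; exists n, c; rewrite ?Nn.
- move=> n c; case: ifP => // Nn _; have [_] := hN n Nn; rewrite exprVn => h.
  have d'2 : 0 <= 2 * d' by lra.
  rewrite mulrA; apply: le_trans (ler_wpM2l d'2 h) _.
  by rewrite mulrCA divff ?mulr1 // gt_eqF //; lra.
have [hqN _] := hN N (leqnn N); have q1' : 0 < 1 - q by case/andP: q01; lra.
move=> K; apply: le_trans (_ : 2 * P * \sum_(n < K) (if (N <= n)%N then q ^+ n else 0) <= _).
  rewrite mulr_sumr; apply: ler_sum => n _; case: ifP => _; last by rewrite mul0r mulr0.
  rewrite size_cat !size_map addnn -mul2n natrM -!mulrA ler_pM2l //.
  exact: powR_level_le (ltW d'0) (proj1 (hcs n)).
apply: le_trans (ler_wpM2l (_ : 0 <= 2 * P) (sum_expr_tail_le N K q01)) _; first lra.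
rewrite mulrA ler_pdivrMr //; have := ler_wpM2l (_ : 0 <= 2 * P) hqN.
by rewrite [_ * (_ / _)]mulrC divfK ?gt_eqF //; lra.
Qed.

End BadSet.

Lemma exists_rate_lt_powR (R : realType) (eps : R) : 0 < eps ->
  exists s lam : R, [/\ 0 < s, s < eps, 1 < lam, lam <= 2 & lam < powR 2 s].
Proof.
move=> eps0; set s := Num.min eps 1 / 2.
have m1 : Num.min eps 1 <= 1 by rewrite ge_min lexx orbT.
have me : Num.min eps 1 <= eps by rewrite ge_min lexx.
have s0 : 0 < s by rewrite divr_gt0 // lt_min eps0 ltr01.
have A1 : 1 < powR 2 s by rewrite /powR pnatr_eq0 expR_gt1 mulr_gt0 // ln_gt0 // ltr1n.
have A2 : powR 2 s <= 2 by apply: ler1_powR; rewrite ?ler1n // /s; lra.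
by exists s, ((1 + powR 2 s) / 2); split=> //; rewrite /s; lra.
Qed.

Theorem proposition6p5 (R : realType) (c : R) :
  0 <= c -> c < 1 ->
  forall eps : R, 0 < eps ->
  forall C : R, 1 < C ->
  exists delta delta' : R,
    0 < delta' /\ delta' < C * delta' /\ C * delta' < delta /\ delta < 1 / 2 /\
    (hdim (badset (1 / 2 - c) delta delta') < eps%:E)%E.
Proof.
move=> c0 c1 eps eps0 C C1; set b := 1 / 2 - c.
have hb : - (1 / 2) < b <= 1 / 2 by apply/andP; split; rewrite /b; lra.
have [s [lam [s0 seps l1 l2 lA]]] := exists_rate_lt_powR eps0.
have [d [d0 d12 step few]] := exists_contracting_scale b C1 l1.
have C0 : 0 < 2 * C by lra.
have d'0 : 0 < d / (2 * C) by rewrite divr_gt0.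
have d'd : d / (2 * C) < d by rewrite ltr_pdivrMr // ltr_pMr //; lra.
have hCd : C * (d / (2 * C)) = d / 2 by field; apply/negP => /eqP; lra.
exists d, (d / (2 * C)); split=> //; split; first by rewrite ltr_pMl.
split; first by rewrite hCd; lra.
split=> //; apply: hdim_lt (ltW s0) seps _.
by apply: hmeasure_badset_eq0 step few => //; rewrite (ltW l1).
Qed.
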